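(* Let $p>1$ and $0<a<1$. Let $r$ be a number with $0<a<a+r<1$ and set $c=b_{\mathbb{D},p}(a,a+r)$. Then \[ \{z:|z-a|<r\}\subset B_{\mathbb{D},p}(a;c). \]
   Context: $\mathbb{D}=\{z\in\mathbb{C}:|z|<1\}$. For $z_1,z_2\in\mathbb{D}$ and $p\ge1$, $b_{\mathbb{D},p}(z_1,z_2)=\sup_{z\in\partial\mathbb{D}}\frac{|z_1-z_2|}{\sqrt[p]{|z_1-z|^p+|z-z_2|^p}}$, and $B_{\mathbb{D},p}(a;c)=\{z\in\mathbb{D}: b_{\mathbb{D},p}(a,z)<c\}$. *)

From Stdlib Require Import Reals.
From Coquelicot Require Import Coquelicot.
Open Scope R_scope.

Definition in_disk (z : C) : Prop := Cmod z < 1.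
Definition on_circle (z : C) : Prop := Cmod z = 1.

Definition b_quot (p : R) (z1 z2 z : C) : R :=
  Cmod (z1 - z2) /
  Rpower (Rpower (Cmod (z1 - z)) p + Rpower (Cmod (z - z2)) p) (/ p).

(* b_{D,p}(z1,z2) = sup over z in the unit circle (as an extended real,
   Coquelicot's least upper bound; it is finite since the quotient is <= 2^(1-1/p)... bounded) *)
Definition b_Dp (p : R) (z1 z2 : C) : R :=
  real (Lub_Rbar (fun t => exists z, on_circle z /\ t = b_quot p z1 z2 z)).

Definition B_Dp (p : R) (a : C) (c : R) (z : C) : Prop :=
  in_disk z /\ b_Dp p a z < c.

(** The quotient defining [b_{D,p}(a, z)] is largest when both boundary
    distances are smallest, and [|a - w| >= 1 - a], [|w - z| >= 1 - |z|] give
    [b_{D,p}(a, z) <= |a - z| / ((1 - a)^p + (1 - |z|)^p)^(1/p)].  On the real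
    segment [0 <= a <= a + r < 1] the boundary point [w = 1] attains these
    bounds, so [c = r / ((1 - a)^p + (1 - a - r)^p)^(1/p)].  For [|z - a| < r]
    we have [|z| < a + r], so the bound for [z] has a smaller numerator and a
    larger denominator than [c]. *)
From Stdlib Require Import Reals Lra.
From Coquelicot Require Import Coquelicot.
Open Scope R_scope.

Lemma real_Lub_Rbar_bounds (E : R -> Prop) (M x : R) :
  (forall y, E y -> y <= M) -> E x -> x <= real (Lub_Rbar E) <= M.
Proof.
  intros HM Ex.
  destruct (Lub_Rbar_correct E) as [Hub Hlub].
  assert (Hle_M : Rbar_le (Lub_Rbar E) M) by (apply Hlub; intros y Ey; apply HM, Ey).
  assert (Hge_x : Rbar_le x (Lub_Rbar E)) by (apply Hub; auto).
  destruct (Lub_Rbar E); simpl in *; try tauto.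
Qed.

Lemma Rpower_gt_0 (x y : R) : 0 < Rpower x y.
Proof. apply exp_pos. Qed.

Lemma Cmod_triangle_rev (u v : C) : Cmod u - Cmod v <= Cmod (u - v).
Proof.
  assert (H := Cmod_triangle (u - v) v).
  replace (u - v + v)%C with u in H by ring. lra.
Qed.

Lemma Cmod_sub_sym (u v : C) : Cmod (u - v) = Cmod (v - u).
Proof.
  replace (u - v)%C with (- (v - u))%C by ring.
  apply Cmod_opp.
Qed.

Lemma Cmod_sub_circle_ge (z w : C) : on_circle w -> 1 - Cmod z <= Cmod (w - z).
Proof. unfold on_circle; intros Hw. rewrite <- Hw. apply Cmod_triangle_rev. Qed.

Lemma RtoC_sub (x y : R) : (RtoC x - RtoC y)%C = RtoC (x - y).
Proof. unfold RtoC, Cminus, Cplus, Copp; simpl; f_equal; ring. Qed.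

Definition lp_norm2 (p u v : R) : R := Rpower (Rpower u p + Rpower v p) (/ p).

Lemma lp_norm2_gt_0 (p u v : R) : 0 < lp_norm2 p u v.
Proof. apply Rpower_gt_0. Qed.

Lemma lp_norm2_le (p u u' v v' : R) :
  0 < p -> 0 < u <= u' -> 0 < v <= v' -> lp_norm2 p u v <= lp_norm2 p u' v'.
Proof.
  intros Hp Hu Hv. unfold lp_norm2.
  apply Rle_Rpower_l; [left; apply Rinv_0_lt_compat; lra |].
  split; [apply Rplus_lt_0_compat; apply Rpower_gt_0 |].
  apply Rplus_le_compat; apply Rle_Rpower_l; lra.
Qed.

Lemma Rdiv_le_compat_denom (x y y' : R) :
  0 <= x -> 0 < y -> y <= y' -> x / y' <= x / y.
Proof.
  intros Hx Hy Hyy. unfold Rdiv.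
  apply Rmult_le_compat_l; [exact Hx | apply Rinv_le_contravar; lra].
Qed.

Section BoundaryQuotient.

Variables (p : R) (z1 z2 : C).
Hypotheses (Hp : 0 < p) (Hz1 : in_disk z1) (Hz2 : in_disk z2).

Let b_max : R := Cmod (z1 - z2) / lp_norm2 p (1 - Cmod z1) (1 - Cmod z2).

Lemma b_quot_le (w : C) : on_circle w -> b_quot p z1 z2 w <= b_max.
Proof.
  intros Hw. unfold in_disk in *.
  assert (H1 : 1 - Cmod z1 <= Cmod (z1 - w))
    by (rewrite Cmod_sub_sym; apply Cmod_sub_circle_ge, Hw).
  assert (H2 := Cmod_sub_circle_ge z2 w Hw).
  apply Rdiv_le_compat_denom; [apply Cmod_ge_0 | apply lp_norm2_gt_0 |].
  apply lp_norm2_le; lra.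
Qed.

Lemma b_Dp_bounds (w : C) :
  on_circle w -> b_quot p z1 z2 w <= b_Dp p z1 z2 <= b_max.
Proof.
  intros Hw. apply real_Lub_Rbar_bounds; [| now exists w].
  intros y [w' [Hw' ->]]. now apply b_quot_le.
Qed.

Lemma b_Dp_le : b_Dp p z1 z2 <= b_max.
Proof.
  apply (b_Dp_bounds (RtoC 1)). unfold on_circle. apply Cmod_1.
Qed.

End BoundaryQuotient.

Lemma b_Dp_real (p x y : R) :
  0 < p -> 0 <= x <= y -> y < 1 ->
  b_Dp p (RtoC x) (RtoC y) = (y - x) / lp_norm2 p (1 - x) (1 - y).
Proof.
  intros Hp Hxy Hy1.
  assert (Hmod : forall t, 0 <= t -> Cmod (RtoC t) = t)
    by (intros t Ht; rewrite Cmod_R; apply Rabs_pos_eq, Ht).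
  assert (Hx : in_disk (RtoC x)) by (unfold in_disk; rewrite Hmod; lra).
  assert (Hy : in_disk (RtoC y)) by (unfold in_disk; rewrite Hmod; lra).
  assert (Hquot : b_quot p (RtoC x) (RtoC y) (RtoC 1)
                  = (y - x) / lp_norm2 p (1 - x) (1 - y)).
  { unfold b_quot. fold (lp_norm2 p).
    rewrite !RtoC_sub, !Cmod_R, (Rabs_minus_sym x y), (Rabs_minus_sym x 1).
    rewrite !Rabs_pos_eq by lra. reflexivity. }
  destruct (b_Dp_bounds p (RtoC x) (RtoC y) Hp Hx Hy (RtoC 1)) as [Hge Hle];
    [apply Cmod_1 |].
  rewrite RtoC_sub, Cmod_R, Rabs_minus_sym, Rabs_pos_eq, !Hmod in Hle by lra.
  lra.
Qed.

Theorem theorem3p19 (p a r : R) :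
  1 < p -> 0 < a -> a < 1 -> 0 < r -> a + r < 1 ->
  forall z : C, Cmod (z - RtoC a) < r ->
    B_Dp p (RtoC a) (b_Dp p (RtoC a) (RtoC (a + r))) z.
Proof.
  intros Hp Ha Ha1 Hr Har z Hz.
  assert (Hmod_a : Cmod (RtoC a) = a) by (rewrite Cmod_R; apply Rabs_pos_eq; lra).
  assert (Hmod_z : Cmod z < a + r).
  { assert (H := Cmod_triangle_rev z (RtoC a)). lra. }
  assert (Hza : Cmod (RtoC a - z) < r) by (rewrite Cmod_sub_sym; exact Hz).
  assert (Ha_disk : in_disk (RtoC a)) by (unfold in_disk; lra).
  assert (Hz_disk : in_disk z) by (unfold in_disk; lra).
  split; [exact Hz_disk |].
  rewrite b_Dp_real by lra.
  replace (a + r - a) with r by ring.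
  apply Rle_lt_trans with (1 := b_Dp_le p _ _ ltac:(lra) Ha_disk Hz_disk).
  rewrite Hmod_a.
  apply Rle_lt_trans with (Cmod (RtoC a - z) / lp_norm2 p (1 - a) (1 - (a + r))).
  - apply Rdiv_le_compat_denom; [apply Cmod_ge_0 | apply lp_norm2_gt_0 |].
    apply lp_norm2_le; lra.
  - apply Rmult_lt_compat_r; [apply Rinv_0_lt_compat, lp_norm2_gt_0 | exact Hza].
Qed.
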